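(* Let $p\colon E\to B$ be an arc-hedgehog covering with $E$ a Peano space. Then $p$ is regular if and only if the deck transformation group $DTG(p)$ acts transitively on each fiber of $p$ (i.e., for all $e_1,e_2\in E$ with $p(e_1)=p(e_2)$ there is $h\in DTG(p)$ with $h(e_1)=e_2$).
   Context: All maps are continuous. A Peano space is a connected, locally path-connected space. For a class $\mathcal{P}$ of spaces, a map $p\colon E\to B$ is a $\mathcal{P}$-covering if for every $e_0\in E$, $X\in\mathcal{P}$, $x_0\in X$ and map $f\colon X\to B$ with $f(x_0)=p(e_0)$ there is a unique map $g\colon X\to E$ with $p\circ g=f$ and $g(x_0)=e_0$. A directed wedge is the wedge $(Z,z_0)=\bigvee_{s\in S}(Z_s,z_s)$ of pointed Peano spaces indexed by a directed set $S$, with the topology: $U\subset Z\setminus\{z_0\}$ is open iff each $U\cap Z_s$ is open in $Z_s$; $U\ni z_0$ is an open neighborhood of $z_0$ iff each $U\cap Z_s$ is open and there is $t\in S$ with $Z_s\subset U$ for all $s>t$. An arc-hedgehog is a directed wedge with each $(Z_s,z_s)\cong([0,1],0)$; an arc-hedgehog covering is a $\mathcal{P}$-covering for $\mathcal{P}$ the class of all arc-hedgehogs (it is in particular an arc-covering, i.e., has unique lifts of paths). Such a covering is regular if for every loop $\alpha$ in $B$ either all lifts of $\alpha$ to $E$ are loops or none are. $DTG(p)$ is the group of homeomorphisms $h\colon E\to E$ with $p\circ h=p$. *)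

From HB Require Import structures.
From mathcomp Require Import all_boot all_order all_algebra.
From mathcomp Require Import all_classical all_reals all_analysis.
From mathcomp Require Import Rstruct Rstruct_topology.

Set Implicit Arguments.
Unset Strict Implicit.
Unset Printing Implicit Defensive.

Import Order.TTheory GRing.Theory Num.Theory.
Local Open Scope classical_set_scope.
Local Open Scope ring_scope.

Definition I01 : set Rdefinitions.R := `[0, 1]%classic.

(** A path in T is a map [0,1] -> T, represented as a function Rdefinitions.R -> T
    continuous on the subspace [0,1] (values outside [0,1] are irrelevant). *)
Definition is_path {T : topologicalType} (g : Rdefinitions.R -> T) : Prop :=
  {within I01, continuous g}.

Definition path_connected_set {T : topologicalType} (A : set T) : Prop :=
  forall x y, A x -> A y ->
    exists g : Rdefinitions.R -> T, [/\ is_path g, g 0 = x, g 1 = y &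
                         g @` I01 `<=` A].

Definition locally_path_connected (T : topologicalType) : Prop :=
  forall (x : T) (U : set T), nbhs x U ->
    exists V : set T, [/\ open V, V x, V `<=` U & path_connected_set V].

Definition Peano (T : topologicalType) : Prop :=
  connected [set: T] /\ locally_path_connected T.

Record dirset := DirSet {
  ds_car :> Type;
  ds_le : ds_car -> ds_car -> Prop;
  ds_refl : forall s, ds_le s s;
  ds_trans : forall s t u, ds_le s t -> ds_le t u -> ds_le s u;
  ds_ub : forall s t, exists u, ds_le s u /\ ds_le t u;
  ds_inh : inhabited ds_car }.

Definition ds_lt (D : dirset) (t s : D) : Prop := ds_le t s /\ ~ ds_le s t.

(** Carrier of the arc-hedgehog over D: the wedge point [None] and, for each
    s, the points t in (0,1] of the s-th arc [Z_s = [0,1]] (with 0 glued to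
    the wedge point). *)
Definition hedgehog (D : dirset) : Type :=
  option (ds_car D * {t : Rdefinitions.R | (0 < t <= 1)}).

HB.instance Definition _ (D : dirset) := gen_eqMixin (hedgehog D).
HB.instance Definition _ (D : dirset) := gen_choiceMixin (hedgehog D).

Definition hh_inj (D : dirset) (s : D) (t : Rdefinitions.R) : hedgehog D :=
  omap (fun u => (s, u)) (insub t : option {t : Rdefinitions.R | (0 < t <= 1)}).

Definition hh_open (D : dirset) (U : set (hedgehog D)) : Prop :=
  (forall s : D, @open (subspace I01) (hh_inj s @^-1` U)) /\
  (U None -> exists t : D, forall s : D, ds_lt t s ->
     forall x : Rdefinitions.R, I01 x -> U (hh_inj s x)).

Section hedgehog_topology.
Variable D : dirset.

Lemma hh_openT : hh_open [set: hedgehog D].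
Proof.
split=> [s|_]; first by rewrite preimage_setT; exact: openT.
by case: (ds_inh D) => t; exists t.
Qed.

Lemma hh_openI : setI_closed (@hh_open D).
Proof.
move=> A B [oA eA] [oB eB]; split=> [s|[/eA [t1 H1] /eB [t2 H2]]].
  by rewrite preimage_setI; exact: openI.
have [u [l1 l2]] := ds_ub t1 t2; exists u => s [us nsu] x x01.
split; [apply: H1 | apply: H2] => //; split.
- exact: ds_trans l1 us.
- by move=> st1; apply: nsu; exact: ds_trans st1 l1.
- exact: ds_trans l2 us.
- by move=> st2; apply: nsu; exact: ds_trans st2 l2.
Qed.

Lemma hh_open_bigU (I : Type) (f : I -> set (hedgehog D)) :
  (forall i, hh_open (f i)) -> hh_open (\bigcup_i f i).
Proof.
move=> oF; split=> [s|[i _ fi]].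
  rewrite preimage_bigcup; apply: bigcup_open => i _; exact: (oF i).1.
have [t Ht] := (oF i).2 fi; exists t => s ts x x01.
by exists i => //; exact: Ht.
Qed.

End hedgehog_topology.

HB.instance Definition _ (D : dirset) :=
  isOpenTopological.Build (hedgehog D) (@hh_openT D) (@hh_openI D)
    (@hh_open_bigU D).

(** P-covering for P = all arc-hedgehogs (up to homeomorphism; the lifting
    property is invariant under homeomorphism, so it suffices to quantify
    over the concrete models [hedgehog D]). *)
Definition arc_hedgehog_covering {E B : topologicalType} (p : E -> B) : Prop :=
  forall (D : dirset) (e0 : E) (x0 : hedgehog D) (f : hedgehog D -> B),
    continuous f -> f x0 = p e0 ->
    exists g : hedgehog D -> E,
      [/\ continuous g, p \o g = f & g x0 = e0] /\
      (forall g' : hedgehog D -> E,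
         [/\ continuous g', p \o g' = f & g' x0 = e0] -> g' = g).

Definition is_loop {T : topologicalType} (g : Rdefinitions.R -> T) : Prop := g 0 = g 1.

Definition is_lift {E B : topologicalType} (p : E -> B) (a : Rdefinitions.R -> B)
    (l : Rdefinitions.R -> E) : Prop :=
  is_path l /\ (forall t, I01 t -> p (l t) = a t).

Definition regular_covering {E B : topologicalType} (p : E -> B) : Prop :=
  forall a : Rdefinitions.R -> B, is_path a -> is_loop a ->
    forall l1 l2 : Rdefinitions.R -> E, is_lift p a l1 -> is_lift p a l2 ->
      (is_loop l1 <-> is_loop l2).

Definition homeomorphism {T U : topologicalType} (h : T -> U) : Prop :=
  continuous h /\
  exists g : U -> T, [/\ continuous g, cancel h g & cancel g h].

Definition deck_transformation {E B : topologicalType} (p : E -> B)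
    (h : E -> E) : Prop :=
  homeomorphism h /\ p \o h = p.

(* A deck transformation commutes with p, so it carries a lift of a loop to a
   lift of the same loop with any prescribed starting point of the fibre; by
   uniqueness of path lifting, transitivity on fibres makes all lifts of a loop
   behave alike.
   Conversely, given p e1 = p e2, send x to the end of the lift from e2 of the
   projection of a path from e1 to x (E is path connected).  Regularity, applied
   to the loop formed by two such paths, makes this independent of the path, and
   exchanging e1 and e2 gives the inverse.  For continuity at x, the paths from x
   to the points of ever smaller path-connected neighbourhoods of x form an
   arc-hedgehog; the lift of its projection is continuous at the wedge point,
   which is continuity of the map at x. *)

From mathcomp Require Import all_boot all_order all_algebra.
From mathcomp Require Import all_classical all_reals all_analysis.
From mathcomp Require Import Rstruct Rstruct_topology lra.

Set Implicit Arguments.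
Unset Strict Implicit.
Unset Printing Implicit Defensive.

Import Order.TTheory GRing.Theory Num.Theory numFieldNormedType.Exports.
Local Open Scope classical_set_scope.
Local Open Scope ring_scope.

Local Notation R := Rdefinitions.R.

Lemma I01E (t : R) : I01 t <-> 0 <= t <= 1.
Proof. by rewrite /I01 /= in_itv. Qed.

Lemma I01_0 : I01 0. Proof. by apply/I01E; rewrite lexx ler01. Qed.
Lemma I01_1 : I01 1. Proof. by apply/I01E; rewrite lexx ler01. Qed.

Lemma within_continuous_comp (S T U : topologicalType) (A : set S) (C : set T)
    (f : S -> T) (g : T -> U) :
  continuous f -> (forall s, A s -> C (f s)) -> {within C, continuous g} ->
  {within A, continuous (g \o f)}.
Proof.
move=> cf fAC /subspace_continuousP cg; apply/subspace_continuousP => x Ax.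
apply: cvg_trans (cg _ (fAC _ Ax)) => W; rewrite !nbhs_simpl /= => HW.
have := cf x _ HW; rewrite nbhs_simpl /=.
by apply: filterS => y Wy Ay; exact: (Wy (fAC _ Ay)).
Qed.

Lemma within_eq_continuous (S T : topologicalType) (A : set S) (f g : S -> T) :
  {in A, f =1 g} -> {within A, continuous f} -> {within A, continuous g}.
Proof. by move=> fg cf; apply: (subspace_eq_continuous _ cf). Qed.

Lemma affine_continuous (K : realType) (a b : K) :
  continuous (fun t : K => a * t + b).
Proof.
move=> t; apply: continuousD; first exact: mulrl_continuous.
exact: cst_continuous.
Qed.

Section path_operations.
Variable T : Type.
Implicit Types g h : R -> T.

Definition path_cat g h (t : R) : T :=
  if t <= 2^-1 then g (2 * t) else h (2 * t - 1).

Definition path_rev g (t : R) : T := g (1 - t).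

Lemma path_cat_l g h t : t <= 2^-1 -> path_cat g h t = g (2 * t).
Proof. by rewrite /path_cat => ->. Qed.

Lemma path_cat_r g h t : 2^-1 < t -> path_cat g h t = h (2 * t - 1).
Proof. by rewrite /path_cat ltNge => /negbTE ->. Qed.

Lemma path_cat0 g h : path_cat g h 0 = g 0.
Proof. by rewrite path_cat_l ?mulr0 // invr_ge0 ler0n. Qed.

Lemma path_cat1 g h : path_cat g h 1 = h 1.
Proof. by rewrite path_cat_r; [congr h; lra | lra]. Qed.

Lemma path_rev0 g : path_rev g 0 = g 1.
Proof. by rewrite /path_rev subr0. Qed.

Lemma path_rev1 g : path_rev g 1 = g 0.
Proof. by rewrite /path_rev subrr. Qed.

Lemma path_revK : involutive path_rev.
Proof. by move=> g; apply: funext => t; rewrite /path_rev subKr. Qed.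

End path_operations.

Lemma comp_path_cat (T U : Type) (f : T -> U) (g h : R -> T) :
  f \o path_cat g h = path_cat (f \o g) (f \o h).
Proof. by apply: funext => t; rewrite /= /path_cat; case: ifP. Qed.

Section paths.
Variable T : topologicalType.
Implicit Types (g h : R -> T) (x : T).

Lemma is_path_affine (A : set R) g (a b : R) :
  is_path g -> (forall t, A t -> I01 (a * t + b)) ->
  {within A, continuous (fun t => g (a * t + b))}.
Proof.
move=> pg aA.
exact: (within_continuous_comp (@affine_continuous R a b) aA pg).
Qed.

Lemma is_path_cst x : is_path (fun=> x).
Proof. by apply: continuous_subspaceT; exact: cst_continuous. Qed.

Lemma is_path_comp (U : topologicalType) (f : T -> U) g :
  continuous f -> is_path g -> is_path (f \o g).
Proof.
move=> cf pg t.
exact: (@continuous_comp _ _ _ (from_subspace I01 g) f t (pg t) (cf (g t))).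
Qed.

Lemma is_path_rev g : is_path g -> is_path (path_rev g).
Proof.
move=> pg; apply: (@within_eq_continuous R _ _ (fun t => g (-1 * t + 1))).
  by move=> t _; rewrite /path_rev; congr g; lra.
by apply: is_path_affine pg _ => t /I01E tI; apply/I01E; lra.
Qed.

Lemma is_path_cat g h : is_path g -> is_path h -> g 1 = h 0 ->
  is_path (path_cat g h).
Proof.
move=> pg ph gh.
apply: (@continuous_subspaceW _ _ I01 (`[0, 2^-1] `|` `[2^-1, 1])).
  move=> t /I01E /andP[t0 t1]; rewrite /= !in_itv /= t0 t1 /=.
  by case: (lerP t 2^-1) => th; [left | right; rewrite ltW].
apply: withinU_continuous; try exact: interval_closed.
  apply: (@within_eq_continuous R _ _ (fun t => g (2 * t + 0))).
    move=> t; rewrite inE /= in_itv /= => /andP[_ t1].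
    by rewrite addr0 path_cat_l.
  apply: is_path_affine pg _ => t; rewrite /= in_itv /= => tI.
  by apply/I01E; lra.
apply: (@within_eq_continuous R _ _ (fun t => h (2 * t + -1))).
  move=> t; rewrite inE /= in_itv /= => /andP[t0 t1].
  have [th|th] := lerP t 2^-1; last by rewrite path_cat_r.
  have -> : t = 2^-1 by apply/eqP; rewrite eq_le th t0.
  by rewrite path_cat_l // mulfV // gh; congr h; lra.
by apply: is_path_affine ph _ => t; rewrite /= in_itv /= => tI; apply/I01E; lra.
Qed.

End paths.

Section path_components.
Variable T : topologicalType.
Implicit Types x y z : T.

Definition path_joinable x y : Prop :=
  exists g : R -> T, [/\ is_path g, g 0 = x & g 1 = y].

Lemma path_joinable_refl x : path_joinable x x.
Proof. by exists (fun=> x); split => //; exact: is_path_cst. Qed.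

Lemma path_joinable_sym x y : path_joinable x y -> path_joinable y x.
Proof.
move=> [g [pg g0 g1]]; exists (path_rev g).
by rewrite path_rev0 path_rev1; split => //; exact: is_path_rev.
Qed.

Lemma path_joinable_trans x y z :
  path_joinable x y -> path_joinable y z -> path_joinable x z.
Proof.
move=> [g [pg g0 g1]] [h [ph h0 h1]]; exists (path_cat g h).
rewrite path_cat0 path_cat1; split => //; apply: is_path_cat => //.
by rewrite g1 h0.
Qed.

Lemma locally_path_joinable x : locally_path_connected T ->
  exists V : set T, [/\ open V, V x & forall y, V y -> path_joinable x y].
Proof.
move=> lpc; have [V [oV Vx _ pcV]] := lpc x setT filterT.
exists V; split => // y Vy; have [g [pg g0 g1 _]] := pcV x y Vx Vy.
by exists g.
Qed.

Lemma Peano_path_joinable : Peano T -> forall x y, path_joinable x y.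
Proof.
move=> [conn lpc] x; pose S := [set y | path_joinable x y].
have oS : open S.
  rewrite openE => y Sy; have [V [oV Vy pV]] := locally_path_joinable y lpc.
  apply: (@filterS _ _ _ V); last exact: open_nbhs_nbhs.
  by move=> z /pV; exact: path_joinable_trans.
have cS : closed S.
  rewrite -[S]setCK; apply: open_closedC; rewrite openE => y nSy.
  have [V [oV Vy pV]] := locally_path_joinable y lpc.
  apply: (@filterS _ _ _ V); last exact: open_nbhs_nbhs.
  move=> z /pV /path_joinable_sym yz Sz; apply: nSy.
  exact: path_joinable_trans yz.
have S_T : S = setT.
  apply: conn; first by exists x; exact: path_joinable_refl.
    by exists S => //; rewrite setTI.
  by exists S => //; rewrite setTI.
by move=> y; rewrite -[path_joinable x y]/(S y) S_T.
Qed.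

End path_components.

Section hedgehog_maps.
Variable D : dirset.

Lemma hh_inj0 (s : D) : hh_inj s 0 = None.
Proof. by rewrite /hh_inj insubF //= ltxx. Qed.

Lemma is_path_hh_inj (s : D) : is_path (hh_inj s).
Proof. by apply/continuousP => U oU; exact: (oU : hh_open U).1 s. Qed.

Lemma hh_continuous (T : topologicalType) (f : hedgehog D -> T) :
  (forall s, is_path (f \o hh_inj s)) ->
  (forall O, open O -> O (f None) -> exists t : D,
     forall s, ds_lt t s -> forall x, I01 x -> O (f (hh_inj s x))) ->
  continuous f.
Proof.
move=> cs cN; apply/continuousP => O oO; split; last exact: cN.
by move=> s; have /continuousP := cs s; apply.
Qed.

Definition hh_glue (T : Type) (x0 : T) (g : D -> R -> T) (h : hedgehog D) : T :=
  if h is Some (s, u) then g s (sval u) else x0.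

Lemma hh_glue_inj (T : Type) (x0 : T) (g : D -> R -> T) s t :
  g s 0 = x0 -> I01 t -> hh_glue x0 g (hh_inj s t) = g s t.
Proof.
move=> g0 /I01E /andP[t0 t1]; rewrite /hh_inj; case: insubP => [u _ <-|] //=.
rewrite t1 andbT -leNgt => tle0.
by have -> : t = 0 by apply/eqP; rewrite eq_le tle0 t0.
Qed.

Lemma hh_glue_continuous (T : topologicalType) (x0 : T) (g : D -> R -> T) :
  (forall s, g s 0 = x0) -> (forall s, is_path (g s)) ->
  (forall O, open O -> O x0 -> exists t : D,
     forall s, ds_lt t s -> g s @` I01 `<=` O) ->
  continuous (hh_glue x0 g).
Proof.
move=> g0 pg gO; apply: hh_continuous => [s|O oO Ox0].
  apply: (@within_eq_continuous R _ _ (g s)) (pg s) => t /[!inE] It.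
  by rewrite /= hh_glue_inj.
have [t gt] := gO O oO Ox0; exists t => s ts x Ix.
by rewrite hh_glue_inj //; apply: (gt s ts); exists x.
Qed.

End hedgehog_maps.

(* The hedgehog over a one-point directed set is the arc [0,1]; arc-hedgehog
   lifting therefore includes unique path lifting. *)
Definition arc_dirset : dirset :=
  @DirSet unit (fun _ _ => True) (fun _ => I) (fun _ _ _ _ _ => I)
    (fun _ _ => ex_intro _ tt (conj I I)) (inhabits tt).

Definition arc_map (T : Type) (a : R -> T) : hedgehog arc_dirset -> T :=
  hh_glue (a 0) (fun=> a).

Lemma arc_map_inj (T : Type) (a : R -> T) (s : arc_dirset) t :
  I01 t -> arc_map a (hh_inj s t) = a t.
Proof. exact: hh_glue_inj. Qed.

Lemma arc_map_comp (T U : Type) (f : T -> U) (a : R -> T) :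
  f \o arc_map a = arc_map (f \o a).
Proof. by apply: funext => -[[]|]. Qed.

Lemma eq_arc_map (T : Type) (a b : R -> T) :
  {in I01, a =1 b} -> arc_map a = arc_map b.
Proof.
move=> ab; apply: funext => -[[_ [u /= /andP[u0 u1]]]|] /=; apply: ab.
  by rewrite inE; apply/I01E; rewrite u1 ltW.
by rewrite inE; exact: I01_0.
Qed.

Lemma arc_map_continuous (T : topologicalType) (a : R -> T) :
  is_path a -> continuous (arc_map a).
Proof.
move=> pa; apply: hh_glue_continuous => // O _ _.
by exists tt => s [_ /=]; case.
Qed.

Section path_lifting.
Variables (E B : topologicalType) (p : E -> B).
Implicit Types (a b : R -> B) (l m : R -> E) (e : E).

Lemma eq_is_lift a b l : {in I01, a =1 b} -> is_lift p a l -> is_lift p b l.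
Proof. by move=> ab [pl pla]; split => // t It; rewrite pla // ab ?inE. Qed.

Lemma is_lift_cat a b l m :
  is_lift p a l -> is_lift p b m -> l 1 = m 0 ->
  is_lift p (path_cat a b) (path_cat l m).
Proof.
move=> [pl pla] [pm pmb] lm; split; first exact: is_path_cat.
move=> t /I01E tI; have [th|th] := lerP t 2^-1.
  by rewrite !path_cat_l // pla //; apply/I01E; lra.
by rewrite !path_cat_r // pmb //; apply/I01E; lra.
Qed.

Lemma is_lift_rev a l : is_lift p a l -> is_lift p (path_rev a) (path_rev l).
Proof.
move=> [pl pla]; split => [|t /I01E tI]; first exact: is_path_rev.
by rewrite /path_rev pla //; apply/I01E; lra.
Qed.

Lemma is_lift_comp (h : E -> E) a l :
  continuous h -> p \o h = p -> is_lift p a l -> is_lift p a (h \o l).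
Proof.
move=> ch ph [pl pla]; split => [|t It /=]; first exact: is_path_comp.
by rewrite -[p (h _)]/((p \o h) _) ph pla.
Qed.

Definition lifts_to a e e' : Prop :=
  exists l, [/\ is_lift p a l, l 0 = e & l 1 = e'].

Lemma lifts_to_proj a e e' : lifts_to a e e' -> p e = a 0 /\ p e' = a 1.
Proof.
by move=> [l [[_ pla] <- <-]]; split; apply: pla; [exact: I01_0 | exact: I01_1].
Qed.

Lemma eq_lifts_to a b e e' :
  {in I01, a =1 b} -> lifts_to a e e' -> lifts_to b e e'.
Proof.
by move=> ab [l [la l0 l1]]; exists l; split => //; exact: eq_is_lift la.
Qed.

Lemma lifts_to_cat a b e e' e'' :
  lifts_to a e e' -> lifts_to b e' e'' -> lifts_to (path_cat a b) e e''.
Proof.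
move=> [l [la l0 l1]] [m [mb m0 m1]]; exists (path_cat l m).
rewrite path_cat0 path_cat1; split => //; apply: is_lift_cat => //.
by rewrite l1 m0.
Qed.

Lemma lifts_to_rev a e e' : lifts_to a e e' -> lifts_to (path_rev a) e' e.
Proof.
move=> [l [la l0 l1]]; exists (path_rev l).
by rewrite path_rev0 path_rev1; split => //; exact: is_lift_rev.
Qed.

Lemma regular_lifts_to_loop a e e' e'' : regular_covering p -> is_path a ->
  lifts_to a e e -> lifts_to a e' e'' -> e'' = e'.
Proof.
move=> reg pa lee [m [ma <- <-]].
have [pe0 pe1] := lifts_to_proj lee; have [l [la l0 l1]] := lee.
have aloop : is_loop a by rewrite /is_loop -pe0 -pe1.
by apply/esym; apply: (reg a pa aloop l m la ma).1; rewrite /is_loop l0 l1.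
Qed.

Lemma lifts_to_hh_inj (D : dirset) (f : hedgehog D -> B) (g : hedgehog D -> E)
    (s : D) :
  continuous g -> p \o g = f ->
  lifts_to (f \o hh_inj s) (g None) (g (hh_inj s 1)).
Proof.
move=> cg pg; exists (g \o hh_inj s); rewrite /= hh_inj0; split => //.
split => [|t _]; first exact/is_path_comp/is_path_hh_inj.
by rewrite -pg.
Qed.

Hypothesis cov : arc_hedgehog_covering p.

Lemma lift_exists a e : is_path a -> p e = a 0 -> exists e', lifts_to a e e'.
Proof.
move=> pa pe.
have [g [[cg pg g0] _]] :=
  @cov arc_dirset e None (arc_map a) (arc_map_continuous pa) (esym pe).
exists (g (hh_inj (tt : arc_dirset) 1)); rewrite -g0.
apply: eq_lifts_to (@lifts_to_hh_inj arc_dirset _ _ tt cg pg) => t /[!inE] It.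
exact: arc_map_inj.
Qed.

Lemma lift_unique a l m : is_path a -> is_lift p a l -> is_lift p a m ->
  l 0 = m 0 -> {in I01, l =1 m}.
Proof.
move=> pa la ma lm0 t /[!inE] It.
have pl0 : arc_map a None = p (l 0) by rewrite /= la.2 //; exact: I01_0.
have [g [_ g_uniq]] :=
  @cov arc_dirset (l 0) None (arc_map a) (arc_map_continuous pa) pl0.
have arc_lift n : is_lift p a n -> n 0 = l 0 -> arc_map n = g.
  move=> [pn pna] n0; apply: g_uniq; split => //.
    exact: arc_map_continuous.
  by rewrite arc_map_comp; apply: eq_arc_map => s /[!inE]; exact: pna.
by rewrite -(arc_map_inj l tt It) -(arc_map_inj m tt It) !arc_lift.
Qed.

Lemma lifts_to_fun a e e' e'' : is_path a ->
  lifts_to a e e' -> lifts_to a e e'' -> e' = e''.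
Proof.
move=> pa [l [la l0 <-]] [m [ma m0 <-]].
by apply: (lift_unique pa la ma); [rewrite l0 m0 | rewrite inE; exact: I01_1].
Qed.

End path_lifting.

Lemma transitive_regular_covering (E B : topologicalType) (p : E -> B) :
  arc_hedgehog_covering p ->
  (forall e1 e2 : E, p e1 = p e2 ->
     exists h : E -> E, deck_transformation p h /\ h e1 = e2) ->
  regular_covering p.
Proof.
move=> cov trans a pa _.
suff loop_lift l1 l2 :
    is_lift p a l1 -> is_lift p a l2 -> is_loop l1 -> is_loop l2.
  by move=> l1 l2 la1 la2; split; apply: loop_lift.
move=> la1 la2 l1loop.
have [h [[[ch _] ph] hl]] :
    exists h, deck_transformation p h /\ h (l1 0) = l2 0.
  by apply: trans; rewrite la1.2 ?la2.2 //; exact: I01_0.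
apply: (lifts_to_fun cov pa (e := l2 0)).
  exists (h \o l1).
  by split; [exact: is_lift_comp | by [] | rewrite /= -l1loop].
by exists l2.
Qed.

Section path_connected_neighbourhoods.
Variables (T : topologicalType) (lpc : locally_path_connected T) (x : T).

(* An open path-connected neighbourhood of [x] with a marked point; the counter
   [pcn_idx] gives every element a strict upper bound, which the wedge topology
   (defined with the strict order) needs. *)
Record pc_nbhd := PcNbhd {
  pcn_set : set T;
  pcn_pt : T;
  pcn_idx : nat;
  pcn_open : open pcn_set;
  pcn_center : pcn_set x;
  pcn_mem : pcn_set pcn_pt;
  pcn_path_connected : path_connected_set pcn_set }.

Definition pcn_le (a b : pc_nbhd) : Prop :=
  pcn_set b `<=` pcn_set a /\ (pcn_idx a <= pcn_idx b)%N.

Lemma pcn_le_refl a : pcn_le a a.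
Proof. by split. Qed.

Lemma pcn_le_trans a b c : pcn_le a b -> pcn_le b c -> pcn_le a c.
Proof.
move=> [ba ab] [cb bc]; split; first by move=> z /cb /ba.
exact: leq_trans ab bc.
Qed.

Lemma pcn_le_ub a b : exists c, pcn_le a c /\ pcn_le b c.
Proof.
have nab : nbhs x (pcn_set a `&` pcn_set b).
  apply: open_nbhs_nbhs; split; first by apply: openI; exact: pcn_open.
  by split; exact: pcn_center.
have [W [oW Wx WV pW]] := lpc nab.
exists (PcNbhd (maxn (pcn_idx a) (pcn_idx b)) oW Wx Wx pW).
by split; split=> /=; [move=> z /WV[] | exact: leq_maxl | move=> z /WV[] |
  exact: leq_maxr].
Qed.

Lemma pc_nbhd_inhabited : inhabited pc_nbhd.
Proof.
have [W [oW Wx _ pW]] := @lpc x setT filterT.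
exact: inhabits (PcNbhd 0 oW Wx Wx pW).
Qed.

Definition pcn_dirset : dirset :=
  DirSet pcn_le_refl pcn_le_trans pcn_le_ub pc_nbhd_inhabited.

Lemma pcn_path_ex (s : pc_nbhd) : exists g : R -> T,
  [/\ is_path g, g 0 = x, g 1 = pcn_pt s & g @` I01 `<=` pcn_set s].
Proof. by apply: pcn_path_connected; [exact: pcn_center | exact: pcn_mem]. Qed.

Definition pcn_path (s : pcn_dirset) : R -> T := sval (cid (pcn_path_ex s)).

Lemma pcn_pathP (s : pcn_dirset) : [/\ is_path (pcn_path s), pcn_path s 0 = x,
  pcn_path s 1 = pcn_pt s & pcn_path s @` I01 `<=` pcn_set s].
Proof. exact: svalP (cid (pcn_path_ex s)). Qed.

Lemma pcn_glue_continuous : continuous (hh_glue x pcn_path).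
Proof.
apply: hh_glue_continuous => [s|s|O oO Ox]; try by case: (pcn_pathP s).
have [W [oW Wx WO pW]] := lpc (open_nbhs_nbhs (conj oO Ox)).
exists (PcNbhd 0 oW Wx Wx pW) => s [[sW _] _] z sz.
by have [_ _ _ /(_ z sz)/sW/WO] := pcn_pathP s.
Qed.

Lemma pcn_cofinal (t : pcn_dirset) y : pcn_set t y ->
  exists s : pcn_dirset, ds_lt t s /\ pcn_pt s = y.
Proof.
move=> ty; exists (PcNbhd (pcn_idx t).+1 (@pcn_open t) (@pcn_center t) ty
  (@pcn_path_connected t)).
by split=> //; split => [|[_ /=]]; [split | rewrite ltnn].
Qed.

End path_connected_neighbourhoods.

Section deck_construction.
Variables (E B : topologicalType) (p : E -> B).
Hypotheses (cp : continuous p) (cov : arc_hedgehog_covering p)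
  (reg : regular_covering p) (PE : Peano E).
Implicit Types (x y z : E) (g : R -> E).

Definition transport e1 e2 x y : Prop :=
  exists g, [/\ is_path g, g 0 = e1, g 1 = x & lifts_to p (p \o g) e2 y].

Lemma transport_proj e1 e2 x y : transport e1 e2 x y -> p y = p x.
Proof. by move=> [g [_ _ <- /lifts_to_proj[]]]. Qed.

Lemma transport_refl e1 e2 : p e1 = p e2 -> transport e1 e2 e1 e2.
Proof.
move=> pe; exists (fun=> e1); split => //; first exact: is_path_cst.
exists (fun=> e2); split => //; split => [|t _ /=]; first exact: is_path_cst.
by rewrite pe.
Qed.

Lemma transport_sym e1 e2 x y : transport e1 e2 x y -> transport e2 e1 y x.
Proof.
move=> [g [pg g0 g1 [l [[pl plg] l0 l1]]]]; exists l; split => //.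
by exists g; split => //; split => // t It /=; rewrite plg.
Qed.

Lemma transport_cat e1 e2 x y z g : transport e1 e2 x y ->
  is_path g -> g 0 = x -> lifts_to p (p \o g) y z -> transport e1 e2 (g 1) z.
Proof.
move=> [f [pf f0 f1 lf]] pg g0 lg; exists (path_cat f g).
rewrite path_cat0 path_cat1 comp_path_cat; split => //.
  by apply: is_path_cat; rewrite ?f1 ?g0.
exact: lifts_to_cat lf lg.
Qed.

Lemma transport_total e1 e2 x : p e1 = p e2 -> exists y, transport e1 e2 x y.
Proof.
move=> pe; have [g [pg g0 g1]] := Peano_path_joinable PE e1 x.
have [y lg] : exists y, lifts_to p (p \o g) e2 y.
  by apply: (lift_exists cov (is_path_comp cp pg)); rewrite /= g0.
by exists y, g.
Qed.

(* Regularity enters here: [f] followed by the reverse of [g] is a loop at [e1]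
   lifting to a loop, so its lift from [e2] is a loop too. *)
Lemma transport_fun e1 e2 x y y' :
  transport e1 e2 x y -> transport e1 e2 x y' -> y = y'.
Proof.
move=> [f [pf f0 f1 lf]] [g [pg g0 g1 lg]].
have [z lz] : exists z, lifts_to p (path_rev (p \o g)) y z.
  apply: (lift_exists cov (is_path_rev (is_path_comp cp pg))).
  by rewrite path_rev0 /= g1 -f1; case: (lifts_to_proj lf).
have pfg : is_path (path_cat f (path_rev g)).
  by apply: is_path_cat (is_path_rev pg) _; rewrite // path_rev0 f1 g1.
have fg_loop : lifts_to p (p \o path_cat f (path_rev g)) e1 e1.
  exists (path_cat f (path_rev g)).
  by rewrite path_cat0 path_cat1 path_rev1; split.
have ze2 : z = e2.
  apply: regular_lifts_to_loop reg (is_path_comp cp pfg) fg_loop _.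
  by rewrite comp_path_cat; exact: lifts_to_cat lf lz.
have := lifts_to_rev lz; rewrite ze2 path_revK => lg'.
exact: (lifts_to_fun cov (is_path_comp cp pg) lg' lg).
Qed.

Definition deck e1 e2 x : E := xget x (transport e1 e2 x).

Lemma deck_transport e1 e2 x : p e1 = p e2 -> transport e1 e2 x (deck e1 e2 x).
Proof. by move=> pe; apply: xgetPex; exact: transport_total. Qed.

Lemma deck_eq e1 e2 x y : transport e1 e2 x y -> deck e1 e2 x = y.
Proof. by move=> xy; apply: (xget_unique _ xy) => y' /transport_fun; apply. Qed.

Lemma deckK e1 e2 : p e1 = p e2 -> cancel (deck e1 e2) (deck e2 e1).
Proof. by move=> pe x; apply/deck_eq/transport_sym/deck_transport. Qed.

Lemma deck_continuous e1 e2 : p e1 = p e2 -> continuous (deck e1 e2).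
Proof.
move=> pe x; have lpc := PE.2; pose G := hh_glue x (@pcn_path _ lpc x).
have cG : continuous G by exact: pcn_glue_continuous.
have cpG : continuous (p \o G).
  by move=> h; exact: (continuous_comp (cG h) (@cp _)).
have pG : (p \o G) None = p (deck e1 e2 x).
  by rewrite (transport_proj (deck_transport x pe)).
have [g [[cg pg g0] _]] :=
  @cov (pcn_dirset lpc x) (deck e1 e2 x) None (p \o G) cpG pG.
move=> W; rewrite nbhs_simpl /= => Wdx.
have : nbhs (None : hedgehog (pcn_dirset lpc x)) (g @^-1` W).
  by apply: cg; rewrite g0.
rewrite nbhsE => -[U [oU UNone] UW]; have [t Ut] := (oU : hh_open U).2 UNone.
have xt : nbhs x (pcn_set t).
  by apply: open_nbhs_nbhs; split; [exact: pcn_open | exact: pcn_center].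
apply: (filterS _ xt) => _ /pcn_cofinal [s [ts <-]].
have [ps s0 s1 _] := pcn_pathP s.
suff dg : deck e1 e2 (pcn_pt s) = g (hh_inj s 1).
  by rewrite /= dg; exact/UW/Ut/I01_1.
rewrite -s1; apply/deck_eq/(transport_cat (deck_transport x pe) ps s0).
rewrite -g0; apply: eq_lifts_to (lifts_to_hh_inj s cg pg) => u /[!inE] Iu.
by rewrite /= /G hh_glue_inj.
Qed.

Lemma deck_transformation_deck e1 e2 :
  p e1 = p e2 -> deck_transformation p (deck e1 e2) /\ deck e1 e2 e1 = e2.
Proof.
move=> pe; split; last exact/deck_eq/transport_refl.
split; last by apply: funext => x /=; exact/transport_proj/deck_transport.
split; first exact: deck_continuous.
exists (deck e2 e1).
by split; [exact: deck_continuous | exact: deckK | exact: deckK].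
Qed.

End deck_construction.

Theorem theorem3p9 (E B : topologicalType) (p : E -> B) :
  continuous p -> Peano E -> arc_hedgehog_covering p ->
  (regular_covering p <->
   forall e1 e2 : E, p e1 = p e2 ->
     exists h : E -> E, deck_transformation p h /\ h e1 = e2).
Proof.
move=> cp PE cov; split; last exact: transitive_regular_covering.
by move=> reg e1 e2 pe; exists (deck p e1 e2); exact: deck_transformation_deck.
Qed.
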